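(* For every nonempty caterpillar $S\subset\mathbb N$ and every $r\in\mathbb N$, \[ \{D\subset\delta(S): |D|=r\} = \{\delta(Y): Y\subset S,\ |Y|=r+1\}. \]
   Context: For $m\in\mathbb N$ let $d(m)$ be the finite set of integers with $m=\sum_{i\in d(m)}2^i$. For a finite $S\subset\mathbb N$ with $|S|\geq2$, $s(S)=\max\{i:\exists x,y\in S,\ i\in d(x)\setminus d(y)\}$ (the first splitting index); with $S_0=\{x\in S:s(S)\notin d(x)\}$, $S_1=\{x\in S:s(S)\in d(x)\}$, $(S_0,S_1)$ is the split of $S$. Caterpillars: the empty set and singletons are caterpillars; a finite $S$ with $|S|\geq 2$ and split $(S_0,S_1)$ is a caterpillar iff one of $S_0,S_1$ is a singleton and the other a caterpillar (every subset of a caterpillar is a caterpillar). For a caterpillar $S$, $\delta(S)=\{s(\{x,y\}):x,y\in S,\ x\neq y\}$. *)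

From mathcomp Require Import all_boot finmap.
Set Implicit Arguments. Unset Strict Implicit. Unset Printing Implicit Defensive.
Local Open Scope fset_scope.

Definition d (m : nat) : {fset nat} :=
  [fset i | i in iota 0 m.+1 & odd (m %/ 2 ^ i)].

(* first splitting index s(S) = max { i : exists x y in S, i \in d x \ d y }
   (meaningful when #|S| >= 2; every such i is <= max S). *)
Definition s (S : {fset nat}) : nat :=
  \max_(i <- iota 0 (\max_(x <- S) x).+1
         | has (fun x => has (fun y => (i \in d x) && (i \notin d y)) S) S) i.

Definition split0 (S : {fset nat}) : {fset nat} := [fset x in S | s S \notin d x].
Definition split1 (S : {fset nat}) : {fset nat} := [fset x in S | s S \in d x].

Inductive caterpillar : {fset nat} -> Prop :=
| cat_small S : #|` S| <= 1 -> caterpillar S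
| cat_split S : 2 <= #|` S| ->
    (#|` split0 S| = 1 /\ caterpillar (split1 S)) \/ (#|` split1 S| = 1 /\ caterpillar (split0 S)) ->
    caterpillar S.

Definition delta (S : {fset nat}) : {fset nat} :=
  [fset s [fset x; y] | x in S, y in S & x != y].

From mathcomp Require Import all_boot finmap zify.
Set Implicit Arguments. Unset Strict Implicit.
Local Open Scope fset_scope.

(* Write S = a |` C when a is separated from every element of C by the digit
   s S.  Then (i) for x, y in C the first splitting index of {x, y} is
   strictly below s S, while (ii) s {a, y} = s S for every y in C.  Hence, for
   nonempty Y included in C, delta (a |` Y) = s S |` delta Y, a disjoint union.
   Every nonempty caterpillar arises from a singleton by repeating this
   peeling step (an induction principle on caterpillars), and along it we
   propagate two facts: #|delta Y| = #|Y| - 1 for nonempty Y included in S,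
   and every D included in delta S equals delta Y for some Y included in S
   with #|Y| = #|D| + 1.  The theorem is the conjunction of the two. *)

Lemma in_d m i : (i \in d m) = odd (m %/ 2 ^ i).
Proof.
rewrite /d !inE mem_iota /=; case: i => [|i] //=; rewrite add1n ltnS.
case: leqP => //= m_small.
rewrite divn_small // (leq_ltn_trans m_small) //.
exact: ltn_trans (ltnSn i) (ltn_expl _ (isT : 1 < 2)).
Qed.

Lemma in_d_le m i : i \in d m -> i <= m.
Proof.
by rewrite /d !inE mem_iota /=; case: i => //= i; rewrite add1n ltnS => /andP[].
Qed.

Lemma digits_inj n x y : x + y <= n ->
  (forall i, odd (x %/ 2 ^ i) = odd (y %/ 2 ^ i)) -> x = y.
Proof.
elim: n x y => [|n IH] x y; first by case: x; case: y.
move=> xy_le digits.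
have halves : x./2 = y./2.
  apply: IH => [|i]; last by rewrite -!divn2 -!divnMA -!expnS digits.
  have := odd_double_half x; have := odd_double_half y; rewrite -!muln2.
  by case: (odd x); case: (odd y) => /= ex ey; lia.
have := digits 0; rewrite expn0 !divn1 => odd_xy.
by rewrite -(odd_double_half x) -(odd_double_half y) halves odd_xy.
Qed.

Lemma d_inj : injective d.
Proof. by move=> x y dxy; apply: (@digits_inj (x + y)) => // i; rewrite -!in_d dxy. Qed.

Lemma digit_diff x y : x != y -> exists i, (i \in d x) != (i \in d y).
Proof.
move=> nxy; have /fset0Pn[i] : (d x `\` d y) `|` (d y `\` d x) != fset0.
  apply: contra nxy => /eqP sym0; apply/eqP; apply: d_inj; apply/fsetP => i.
  move/fsetP/(_ i): sym0; rewrite in_fsetU !in_fsetD inE.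
  by case: (i \in d x); case: (i \in d y).
rewrite in_fsetU !in_fsetD => diff; exists i.
by move: diff; case: (i \in d x); case: (i \in d y).
Qed.

Definition splits (T : {fset nat}) (i : nat) : bool :=
  has (fun x => has (fun y => (i \in d x) && (i \notin d y)) T) T.

Lemma splitsP T i :
  reflect (exists x y, [/\ x \in T, y \in T, i \in d x & i \notin d y]) (splits T i).
Proof.
apply: (iffP hasP) => [[x xT /hasP[y yT /andP[xi yi]]]|[x [y [xT yT xi yi]]]].
  by exists x, y.
by exists x => //; apply/hasP; exists y; rewrite ?xi.
Qed.

Lemma splits_sub T T' i : T `<=` T' -> splits T i -> splits T' i.
Proof.
move=> /fsubsetP TT' /splitsP[x [y [xT yT xi yi]]].
by apply/splitsP; exists x, y; split; rewrite ?TT'.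
Qed.

Lemma splits_pair x y i : splits [fset x; y] i = ((i \in d x) != (i \in d y)).
Proof.
apply/splitsP/idP => [[u [v []]]|].
  rewrite !in_fsetU !in_fset1 => /orP[]/eqP-> /orP[]/eqP->;
  by case: (i \in d x); case: (i \in d y).
case xi: (i \in d x); case yi: (i \in d y) => // _; [exists x, y | exists y, x];
  by rewrite !in_fsetU !in_fset1 !eqxx xi yi orbT.
Qed.

Lemma splits_range T i : splits T i -> i \in iota 0 (\max_(x <- T) x).+1.
Proof.
case/splitsP=> x [y [xT _ xi _]].
rewrite mem_iota leq0n add0n ltnS (leq_trans (in_d_le xi)) //.
exact: (@leq_bigmax_seq _ _ xpredT (fun j => j) x xT isT).
Qed.

Lemma bigmax_seq_cond (r : seq nat) (Q : pred nat) i :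
  i \in r -> Q i -> Q (\max_(j <- r | Q j) j).
Proof.
move=> ir Qi; have : (\max_(j <- r | Q j) j == 0) || Q (\max_(j <- r | Q j) j).
  apply: (big_ind (fun m => (m == 0) || Q m)) => // [m n|j ->]; last exact: orbT.
  by rewrite /maxn; case: ltnP.
case/orP=> // /eqP max0.
by move: (@leq_bigmax_seq _ r Q (fun j => j) i ir Qi); rewrite max0 leqn0 => /eqP <-.
Qed.

Lemma s_max T i : splits T i -> i <= s T.
Proof.
by move=> Ti; apply: (@leq_bigmax_seq _ _ (splits T) (fun j => j)); rewrite ?splits_range.
Qed.

Lemma s_splits T i : splits T i -> splits T (s T).
Proof. by move=> Ti; apply: (bigmax_seq_cond (splits_range Ti)). Qed.

Lemma pair_sub (S : {fset nat}) x y : x \in S -> y \in S -> [fset x; y] `<=` S.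
Proof. by move=> xS yS; rewrite fsubUset !fsub1set xS yS. Qed.

Lemma s_pair_eq S x y : x \in S -> y \in S ->
  (s S \in d x) != (s S \in d y) -> s [fset x; y] = s S.
Proof.
move=> xS yS xy_split; have pair_s : splits [fset x; y] (s S) by rewrite splits_pair.
apply/eqP; rewrite eqn_leq (s_max pair_s) andbT.
exact/s_max/(splits_sub (pair_sub xS yS))/(s_splits pair_s).
Qed.

Lemma s_pair_lt S x y : x \in S -> y \in S -> x != y ->
  (s S \in d x) = (s S \in d y) -> s [fset x; y] < s S.
Proof.
move=> xS yS nxy xy_agree.
have [i] := digit_diff nxy; rewrite -splits_pair => /s_splits pair_s.
rewrite ltn_neqAle (s_max (splits_sub (pair_sub xS yS) pair_s)) andbT.
by apply: contraTneq pair_s => ->; rewrite splits_pair xy_agree eqxx.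
Qed.

Lemma deltaP z S :
  reflect (exists x y, [/\ x \in S, y \in S, x != y & z = s [fset x; y]]) (z \in delta S).
Proof.
apply: (iffP (imfset2P _ _ _ _ _)) => [[x xS [y /[!inE] /andP[yS nxy] ->]]|].
  by exists x, y.
by case=> x [y [xS yS nxy ->]]; exists x => //; exists y; rewrite // !inE yS.
Qed.

Lemma delta_sub Y S : Y `<=` S -> delta Y `<=` delta S.
Proof.
move=> /fsubsetP YS; apply/fsubsetP => z /deltaP[x [y [xY yY nxy ->]]].
by apply/deltaP; exists x, y; rewrite !YS.
Qed.

Lemma delta1 a : delta [fset a] = fset0.
Proof.
apply/fsetP => z; rewrite inE; apply/deltaP => -[x [y []]].
by rewrite !in_fset1 => /eqP-> /eqP->; rewrite eqxx.
Qed.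

Definition delta_card_law (S : {fset nat}) : Prop :=
  forall Y, Y `<=` S -> Y != fset0 -> #|` delta Y| = (#|` Y|).-1.

Definition delta_realizable (S : {fset nat}) : Prop :=
  forall D, D `<=` delta S -> exists Y, [/\ Y `<=` S, #|` Y| = (#|` D|).+1 & D = delta Y].

Section Peel.
(* S = a |` C where the digit s S separates a from every element of C:
   this is how a caterpillar with at least two elements decomposes. *)
Variables (S C : {fset nat}) (a : nat).
Hypothesis S_peel : S = a |` C.
Hypothesis C_sep : forall y, y \in C -> (s S \in d y) != (s S \in d a).

Lemma peel_in : a \in S.
Proof. by rewrite S_peel fset1U1. Qed.

Lemma peel_notin : a \notin C.
Proof. by apply/negP => /C_sep; rewrite eqxx. Qed.

Lemma peel_sub : C `<=` S.
Proof. by rewrite S_peel fsubsetU1. Qed.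

Lemma peel_sep y : y \in C -> s [fset a; y] = s S.
Proof.
move=> yC; rewrite (s_pair_eq peel_in (fsubsetP peel_sub _ yC)) //.
by rewrite eq_sym C_sep.
Qed.

Lemma peel_s_notin Y : Y `<=` C -> s S \notin delta Y.
Proof.
move=> /fsubsetP YC; apply/negP => /deltaP[x [y [/YC xC /YC yC nxy xy_s]]].
have agree : (s S \in d x) = (s S \in d y).
  by move: (C_sep xC) (C_sep yC); do 3!case: (_ \in d _).
have := s_pair_lt (fsubsetP peel_sub _ xC) (fsubsetP peel_sub _ yC) nxy agree.
by rewrite -xy_s ltnn.
Qed.

Lemma delta_peel Y : Y `<=` C -> Y != fset0 -> delta (a |` Y) = s S |` delta Y.
Proof.
move=> /fsubsetP YC /fset0Pn[y0 y0Y]; apply/fsetP => z; rewrite in_fset1U.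
apply/deltaP/idP => [[x [y [+ + + ->]]]|].
  rewrite !in_fset1U => /orP[/eqP->|xY] /orP[/eqP->|yY]; rewrite ?eqxx // => nxy.
  - by rewrite peel_sep ?eqxx ?YC.
  - by rewrite fsetUC peel_sep ?eqxx ?YC.
  - by apply/orP; right; apply/deltaP; exists x, y.
case/orP=> [/eqP->|z_delta]; first exists a, y0.
  split; rewrite ?in_fset1U ?eqxx ?y0Y ?orbT ?peel_sep ?YC //.
  by apply: contraNneq peel_notin => ->; apply: YC.
have /deltaP[x [y [xY yY nxy ->]]] := z_delta.
by exists x, y; rewrite !in_fset1U xY yY !orbT.
Qed.

Lemma card_delta_peel : delta_card_law C -> delta_card_law S.
Proof.
move=> C_law Y YS Yn; have YaC : Y `\ a `<=` C by rewrite fsubDset -S_peel.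
have [aY|aY] := boolP (a \in Y); last by rewrite -(mem_fsetD1 aY) C_law // mem_fsetD1.
rewrite -(fsetD1K aY); have [->|Yan] := eqVneq (Y `\ a) fset0.
  by rewrite fsetU0 delta1 cardfs1.
rewrite delta_peel // !cardfsU1 peel_s_notin // fsetD11 C_law // add1n prednK //.
by rewrite cardfs_gt0.
Qed.

(* Realizability passes from C to S: realize D minus s S inside C, then add a
   exactly when s S belongs to D. *)
Lemma realizable_peel : C != fset0 -> delta_realizable C -> delta_realizable S.
Proof.
move=> Cn C_real D; rewrite {1}S_peel delta_peel ?fsubset_refl // => DS.
have DsC : D `\ s S `<=` delta C by rewrite fsubDset.
have [Y [YC cardY DY]] := C_real _ DsC.
have Yn : Y != fset0 by rewrite -cardfs_gt0 cardY.
have aY : a \notin Y by apply: contra (fsubsetP YC a) peel_notin.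
have [sD|sD] := boolP (s S \in D); [exists (a |` Y); split | exists Y; split].
- by rewrite S_peel fsetUS.
- by rewrite cardfsU1 aY cardY (cardfsD1 (s S) D) sD.
- by rewrite delta_peel // -DY fsetD1K.
- exact: fsubset_trans YC peel_sub.
- by rewrite cardY mem_fsetD1.
- by rewrite -DY mem_fsetD1.
Qed.
End Peel.

Lemma in_split0 S x : (x \in split0 S) = (x \in S) && (s S \notin d x).
Proof. by rewrite /split0 !inE. Qed.

Lemma in_split1 S x : (x \in split1 S) = (x \in S) && (s S \in d x).
Proof. by rewrite /split1 !inE. Qed.

Lemma peel_split S C a (b : bool) :
  (forall x, (x \in [fset a]) = (x \in S) && ((s S \in d x) == b)) ->
  (forall x, (x \in C) = (x \in S) && ((s S \in d x) != b)) ->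
  S = a |` C /\ (forall y, y \in C -> (s S \in d y) != (s S \in d a)).
Proof.
move=> Sa SC; have /andP[_ /eqP ab] : (a \in S) && ((s S \in d a) == b).
  by rewrite -Sa fset11.
split=> [|y]; last by rewrite SC ab => /andP[].
apply/fsetP => x; rewrite in_fset1U SC -in_fset1 Sa.
by case: (x \in S); case: (_ == b).
Qed.

Lemma caterpillar_peel_ind (Q : {fset nat} -> Prop) :
  (forall a, Q [fset a]) ->
  (forall S C a, S = a |` C ->
     (forall y, y \in C -> (s S \in d y) != (s S \in d a)) ->
     C != fset0 -> Q C -> Q S) ->
  forall S, caterpillar S -> S != fset0 -> Q S.
Proof.
move=> Q1 Qpeel S; have [n] := ubnP #|` S|; elim: n S => // n IH S + cS.
case: cS => [{}S small|{}S big split] ltSn Sn.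
  by have /cardfs1P[a ->] : #|` S| == 1 by rewrite eqn_leq small cardfs_gt0.
have peel C a b : caterpillar C ->
    (forall x, (x \in [fset a]) = (x \in S) && ((s S \in d x) == b)) ->
    (forall x, (x \in C) = (x \in S) && ((s S \in d x) != b)) -> Q S.
  move=> Cc Sa SC; have [S_peel C_sep] := peel_split Sa SC.
  have cardS : #|` S| = (#|` C|).+1 by rewrite S_peel cardfsU1 (peel_notin C_sep).
  have Cn : C != fset0 by rewrite -cardfs_gt0 -ltnS -cardS.
  by apply: (Qpeel S C a) => //; apply: IH; rewrite // -ltnS -cardS.
case: split => [[/eqP/cardfs1P[a S0] Cc]|[/eqP/cardfs1P[a S1] Cc]].
  apply: (peel _ a false Cc) => x;
  by rewrite ?in_split1 -?S0 ?in_split0; case: (_ \in d x).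
apply: (peel _ a true Cc) => x;
by rewrite ?in_split0 -?S1 ?in_split1; case: (_ \in d x).
Qed.

Lemma caterpillar_delta_card S : caterpillar S -> S != fset0 -> delta_card_law S.
Proof.
apply: caterpillar_peel_ind => [a Y|T C a T_peel C_sep _].
  by rewrite fsubset1 => /orP[]/eqP->; rewrite ?eqxx // delta1 cardfs1 cardfs0.
exact: card_delta_peel T_peel C_sep.
Qed.

Lemma caterpillar_delta_realizable S :
  caterpillar S -> S != fset0 -> delta_realizable S.
Proof.
apply: caterpillar_peel_ind => [a D|T C a T_peel C_sep Cn].
  rewrite delta1 fsubset0 => /eqP->; exists [fset a].
  by rewrite fsubset_refl cardfs1 cardfs0 delta1.
exact: realizable_peel T_peel C_sep Cn.
Qed.

Unset Implicit Arguments.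

Theorem mainTheorem6 (S : {fset nat}) (r : nat) :
  caterpillar S -> S != fset0 ->
  forall D : {fset nat},
    (D `<=` delta S /\ #|` D| = r) <->
    (exists Y : {fset nat}, [/\ Y `<=` S, #|` Y| = r.+1 & D = delta Y]).
Proof.
move=> cS Sn D; split => [[DS <-]|[Y [YS cardY ->]]].
  exact: caterpillar_delta_realizable.
split; first exact: delta_sub.
by rewrite (caterpillar_delta_card cS Sn YS) ?cardY // -cardfs_gt0 cardY.
Qed.
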